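(* Let $E$ be a Banach space and let $\mathscr{S}_1,\dots,\mathscr{S}_n\subseteq\mathcal{L}(E)$ be mean ergodic operator semigroups such that $ST=TS$ whenever $T\in\mathscr{S}_i$, $S\in\mathscr{S}_j$ with $i\neq j$. Then $$\ker(\mathscr{S}_1-\mathrm{Id})\cdots(\mathscr{S}_n-\mathrm{Id})=\ker(\mathscr{S}_1-\mathrm{Id})+\cdots+\ker(\mathscr{S}_n-\mathrm{Id}).$$
   Context: $\mathcal{L}(E)$ denotes the bounded linear operators on $E$. A semigroup $\mathscr{S}\subseteq\mathcal{L}(E)$ is mean ergodic if the closure (in the strong operator topology) of its convex hull contains a zero element $P$, i.e. $PT=P=TP$ for all $T\in\mathscr{S}$. For a set $\mathscr{A}\subseteq\mathcal{L}(E)$, $\ker\mathscr{A}=\bigcap_{A\in\mathscr{A}}\ker A$; here $\ker(\mathscr{S}_j-\mathrm{Id})=\bigcap_{S\in\mathscr{S}_j}\ker(S-\mathrm{Id})$, and $\ker(\mathscr{S}_1-\mathrm{Id})\cdots(\mathscr{S}_n-\mathrm{Id})$ is the intersection of $\ker\big((S_1-\mathrm{Id})\cdots(S_n-\mathrm{Id})\big)$ over all choices $S_j\in\mathscr{S}_j$. *)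

From HB Require Import structures.
From mathcomp Require Import all_boot all_order all_algebra.
From mathcomp Require Import all_classical all_reals all_analysis.
Set Implicit Arguments. Unset Strict Implicit. Unset Printing Implicit Defensive.
Import Order.TTheory GRing.Theory Num.Theory.
Import numFieldNormedType.Exports.
Local Open Scope classical_set_scope.
Local Open Scope ring_scope.

(* Scalars K : numFieldType (covers R and C); E a Banach space over K. *)
Section Defs.
Variables (K : numFieldType) (E : completeNormedModType K).

Definition bounded_op (T : E -> E) : Prop := linear T /\ continuous T.

Definition op_semigroup (S : set (E -> E)) : Prop :=
  S `<=` bounded_op /\ forall T U, S T -> S U -> S (T \o U).

Definition conv_hull (S : set (E -> E)) : set (E -> E) :=
  [set A | exists (m : nat) (lam : 'I_m -> K) (Ts : 'I_m -> E -> E),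
     [/\ forall k, 0 <= lam k, \sum_(k < m) lam k = 1, forall k, S (Ts k)
       & forall x, A x = \sum_(k < m) lam k *: Ts k x]].

(* P ∈ L(E) lies in the strong-operator-topology closure of C *)
Definition sot_closure (C : set (E -> E)) : set (E -> E) :=
  [set P | bounded_op P /\
     forall (m : nat) (xs : 'I_m -> E) (e : K), 0 < e ->
       exists2 A, C A & forall k, `|A (xs k) - P (xs k)| < e].

Definition zero_elt (S : set (E -> E)) (P : E -> E) : Prop :=
  forall T, S T -> P \o T = P /\ T \o P = P.

Definition mean_ergodic (S : set (E -> E)) : Prop :=
  exists2 P, sot_closure (conv_hull S) P & zero_elt S P.

Definition fix_space (S : set (E -> E)) : set E :=
  [set x | forall T, S T -> T x = x].

Definition prod_minus_id (n : nat) (f : 'I_n -> E -> E) : E -> E :=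
  foldr (fun i g => (fun x => f i x - x) \o g) id (enum 'I_n).

Definition ker_prod (n : nat) (Ss : 'I_n -> set (E -> E)) : set E :=
  [set x | forall f : 'I_n -> E -> E, (forall j, Ss j (f j)) ->
             prod_minus_id f x = 0].

Definition sum_fix (n : nat) (Ss : 'I_n -> set (E -> E)) : set E :=
  [set x | exists2 y : 'I_n -> E, (forall j, fix_space (Ss j) (y j)) &
             x = \sum_(j < n) y j].
End Defs.

From HB Require Import structures.
From mathcomp Require Import all_boot all_order all_algebra.
From mathcomp Require Import all_classical all_reals all_analysis.
Set Implicit Arguments. Unset Strict Implicit. Unset Printing Implicit Defensive.
Import Order.TTheory GRing.Theory Num.Theory.
Import numFieldNormedType.Exports.
Local Open Scope classical_set_scope.
Local Open Scope ring_scope.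

(* Let P_j be a zero element of S_j in the strong closure of conv(S_j).
   Since a continuous linear functional of (T - Id)y that vanishes for all T
   in S_j also vanishes for convex combinations and their strong limits, every
   factor (T_j - Id) of (T_1 - Id)...(T_n - Id) x = 0 may be replaced by
   (P_j - Id), so (P_1 - Id)...(P_n - Id) x = 0. Peeling off one factor at a
   time, x = sum_j y_j +- (P_1 - Id)...(P_k - Id) x with y_j in the range of
   P_j, which is fixed by S_j as T P_j = P_j. Conversely a fixed vector of S_j
   is killed by the product because (S_j - Id) commutes with the other
   factors. *)

Section LinearFun.
Variables (R : pzRingType) (U V : lmodType R) (T : U -> V).
Hypothesis linT : linear T.

Lemma lin0 : T 0 = 0.
Proof. by have := linT (-1) 0 0; rewrite scaler0 addr0 scaleN1r addNr. Qed.

Lemma linD u v : T (u + v) = T u + T v.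
Proof. by have := linT 1 u v; rewrite !scale1r. Qed.

Lemma linB u v : T (u - v) = T u - T v.
Proof. by have := linT (-1) v u; rewrite !scaleN1r ![- _ + _]addrC. Qed.

Lemma linZ a u : T (a *: u) = a *: T u.
Proof. by have := linT a u 0; rewrite !addr0 lin0 addr0. Qed.

Lemma lin_sum (I : Type) (r : seq I) (F : I -> U) :
  T (\sum_(i <- r) F i) = \sum_(i <- r) T (F i).
Proof. by apply: (big_ind2 (fun a b => T a = b)) => [|a b c d <- <-|]; rewrite ?lin0 ?linD. Qed.

End LinearFun.

Section ProdSubId.
Variables (R : pzRingType) (V : lmodType R) (I : eqType).
Implicit Types (f g : I -> V -> V) (s : seq I).

Definition prod_sub_id f s : V -> V :=
  foldr (fun i h => (fun x => f i x - x) \o h) id s.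

Lemma linear_prod_sub_id f s : (forall i, linear (f i)) -> linear (prod_sub_id f s).
Proof.
move=> linf; elim: s => [//|i s IH] a u v /=.
by rewrite IH linf scalerBr opprD addrACA.
Qed.

Lemma eq_prod_sub_id f g s : {in s, f =1 g} -> prod_sub_id f s =1 prod_sub_id g s.
Proof.
elim: s => [//|i s IH] fg x /=.
by rewrite IH ?fg ?mem_head // => j js; rewrite fg // inE js orbT.
Qed.

Lemma prod_sub_id_commute f s (T : V -> V) : linear T ->
  {in s, forall i, T \o f i = f i \o T} ->
  forall x, T (prod_sub_id f s x) = prod_sub_id f s (T x).
Proof.
move=> linT; elim: s => [//|i s IH] fT x /=.
rewrite linB // -IH => [|j js]; last by rewrite fT // inE js orbT.
by rewrite -[T (f i _)]/((T \o f i) _) fT ?mem_head.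
Qed.

Lemma prod_sub_id_fixed f s j y : (forall i, linear (f i)) -> uniq s -> j \in s ->
  {in s, forall i, i != j -> f j \o f i = f i \o f j} ->
  f j y = y -> prod_sub_id f s y = 0.
Proof.
move=> linf; elim: s => [//|k s IH] /= /andP[ks us] js fjC fy.
have fjCs : {in s, forall i, i != j -> f j \o f i = f i \o f j}.
  by move=> i is_; apply: fjC; rewrite inE is_ orbT.
case: (eqVneq k j) => [kj|kj].
  subst k; rewrite prod_sub_id_commute ?fy ?subrr // => i is_.
  by apply: fjCs => //; apply: contraNneq ks => <-.
rewrite IH //; first by rewrite lin0 // subrr.
by move: js; rewrite inE eq_sym (negbTE kj).
Qed.

End ProdSubId.

Section ConvexApproximation.
Variables (K : numFieldType) (E : completeNormedModType K).
Variables (S : set (E -> E)) (L : E -> E) (y : E).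
Hypotheses (linL : linear L) (L_S : forall T, S T -> L (T y - y) = 0).

Lemma conv_hull_sub_id A : conv_hull S A -> L (A y - y) = 0.
Proof.
move=> [m [lam [Ts [_ lam1 STs ->]]]].
have -> : \sum_(k < m) lam k *: Ts k y - y = \sum_(k < m) lam k *: (Ts k y - y).
  rewrite -[X in _ - X]scale1r -lam1 scaler_suml -sumrB.
  by apply: eq_bigr => k _; rewrite scalerBr.
by rewrite lin_sum //; apply: big1 => k _; rewrite linZ // L_S // scaler0.
Qed.

Lemma sot_closure_sub_id P : continuous L ->
  sot_closure (conv_hull S) P -> L (P y - y) = 0.
Proof.
move=> contL [_ P_lim]; apply/eqP; apply: contraT => LPy_neq0.
have LPy_gt0 : 0 < `|L (P y - y)| by rewrite normr_gt0.
have /cvgr_dist_lt/(_ _ LPy_gt0)/nbhs_normP[d d_gt0 near_Py] := contL (P y - y).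
have [A hullA Ay_near] := P_lim 1%N (fun=> y) d d_gt0.
have := near_Py (A y - y).
rewrite /= opprB addrA subrK -opprB normrN => /(_ (Ay_near ord0)).
by rewrite (conv_hull_sub_id hullA) subr0 ltxx.
Qed.

End ConvexApproximation.

Lemma sot_closure_conv_hull_nonempty (K : numFieldType)
    (E : completeNormedModType K) (S : set (E -> E)) P :
  sot_closure (conv_hull S) P -> exists T, S T.
Proof.
move=> [_ /(_ 0%N (fun=> 0) 1 ltr01) [_ [[|m] [lam [Ts [_ lam1 STs _]]]] _]].
  by move: lam1; rewrite big_ord0 => /esym/eqP; rewrite oner_eq0.
by exists (Ts ord0).
Qed.

Section MeanErgodicProjections.
Variables (K : numFieldType) (E : completeNormedModType K) (n : nat).
Variables (Ss : 'I_n -> set (E -> E)) (P : 'I_n -> E -> E).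

(* The induction runs over the list of factors still to be replaced; the
   functional L absorbs the factors already replaced by P. *)
Lemma prod_sub_id_projections x :
  (forall j, sot_closure (conv_hull (Ss j)) (P j)) ->
  forall s, uniq s -> forall L : E -> E, linear L -> continuous L ->
  (forall f, (forall j, Ss j (f j)) -> L (prod_sub_id f s x) = 0) ->
  L (prod_sub_id P s x) = 0.
Proof.
move=> P_lim; elim=> [|k s IH] /=.
  have /choice[f0 Ss_f0] := fun j => sot_closure_conv_hull_nonempty (P_lim j).
  by move=> _ L _ _ /(_ f0 Ss_f0).
move=> /andP[ks us] L linL contL L_f.
have [[linPk contPk] _] := P_lim k.
apply: (IH us (fun v => L (P k v - v))).
- by move=> a u v /=; rewrite linPk -linL scalerBr opprD addrACA.
- move=> v; apply: (@continuous_comp _ _ _ (fun v => P k v - v) L v).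
    by apply: cvgB; [exact: contPk | exact: cvg_id].
  exact: contL.
move=> f Ss_f /=; apply: (sot_closure_sub_id linL _ contL (P_lim k)) => T SkT.
pose fT i := if i == k then T else f i.
have fT_s : prod_sub_id fT s x = prod_sub_id f s x.
  by apply: eq_prod_sub_id => i is_; rewrite /fT; case: eqP => // ik; rewrite -ik is_ in ks.
have fT_k : fT k = T by rewrite /fT eqxx.
have := L_f fT; rewrite /= fT_s fT_k; apply=> j.
by rewrite /fT; case: eqP => [->|].
Qed.

Lemma sum_fix_add_prod_sub_id x :
  (forall j, op_semigroup (Ss j)) -> (forall j, zero_elt (Ss j) (P j)) ->
  forall s, exists2 y : 'I_n -> E, (forall j, fix_space (Ss j) (y j)) &
    x = \sum_(j < n) y j + (-1) ^+ size s *: prod_sub_id P s x.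
Proof.
move=> semiSs zeroP.
have linSs j T : Ss j T -> linear T by move=> SjT; exact: ((semiSs j).1 T SjT).1.
elim=> [|k s [y fix_y x_eq]] /=.
  exists (fun=> 0); first by move=> j T /linSs; apply: lin0.
  by rewrite big1 // add0r expr0 scale1r.
set z := prod_sub_id P s x.
exists (fun j => y j + (if j == k then (-1) ^+ size s *: P k z else 0)).
  move=> j T SjT /=; have linT := linSs j T SjT.
  rewrite linD // fix_y //; case: eqP => [jk|_]; last by rewrite lin0.
  by rewrite -jk linZ // -[in RHS](zeroP j T SjT).2.
have sum_k (c : E) : \sum_(j < n) (if j == k then c else 0) = c.
  by rewrite (bigD1 k) //= eqxx big1 ?addr0 // => j /negbTE ->.
rewrite big_split /= sum_k {1}x_eq exprS mulN1r scaleNr scalerBr opprB -!addrA.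
by congr (_ + _); rewrite addrC subrK.
Qed.

End MeanErgodicProjections.

Theorem theorem1p3 (K : numFieldType) (E : completeNormedModType K)
    (n : nat) (Ss : 'I_n -> set (E -> E)) :
  (forall j, op_semigroup (Ss j)) ->
  (forall j, mean_ergodic (Ss j)) ->
  (forall i j : 'I_n, i != j -> forall T S, Ss i T -> Ss j S -> S \o T = T \o S) ->
  ker_prod Ss = sum_fix Ss.
Proof.
move=> semiSs ergSs commSs.
have /choice[P P_spec] : forall j, exists P, sot_closure (conv_hull (Ss j)) P /\
    zero_elt (Ss j) P by move=> j; have [P ? ?] := ergSs j; exists P.
apply/seteqP; split=> x.
- move=> x_ker; have P_ker : prod_sub_id P (enum 'I_n) x = 0.
    apply: (prod_sub_id_projections (L := id) (fun j => (P_spec j).1) (enum_uniq _)).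
    + by move=> a u v.
    + by move=> v; exact: cvg_id.
    + exact: x_ker.
  have [y fix_y ->] := sum_fix_add_prod_sub_id x semiSs (fun j => (P_spec j).2) (enum 'I_n).
  by exists y; rewrite // P_ker scaler0 addr0.
- move=> [y fix_y ->] f Ss_f.
  have linf i : linear (f i) by exact: ((semiSs i).1 _ (Ss_f i)).1.
  rewrite [prod_minus_id _ _]lin_sum; last exact: linear_prod_sub_id.
  apply: big1 => j _; apply: (prod_sub_id_fixed _ (enum_uniq _)) => //.
  + by rewrite mem_enum.
  + by move=> i _ ij; exact: commSs ij _ _ (Ss_f i) (Ss_f j).
  + exact: fix_y (f j) (Ss_f j).
Qed.
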